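(* Let $f:E_A^{\mathbb N}\to\mathbb R$ be a strongly regular Hölder-type function, $\delta>0$ with $P(\delta f)=0$, and fix $\rho\in E_A^{\mathbb N}$. Define, for $T>0$, $$m(T):=\sup\{|\omega|:\omega\in E^*_\rho,\ S_{|\omega'|}f(\omega'\rho)\ge -T\ \text{for all }\omega'\in E^*_\rho\text{ with }|\omega'|\le|\omega|\},$$ $$M(T):=\sup\{|\omega|:\omega\in E^*_\rho,\ S_{|\omega|}f(\omega\rho)\ge -T\},$$ with the convention $\sup\emptyset=-\infty$. Then both limits $\lim_{T\to\infty}m(T)/T$ and $\lim_{T\to\infty}M(T)/T$ exist (in the extended real line).
   Context: $E$ is a countable set, $A:E\times E\to\{0,1\}$, $E_A^{\mathbb N}$ the set of sequences $\rho$ with $A_{\rho_i\rho_{i+1}}=1$ for all $i$, $E_A^n$ the admissible words of length $n$, $E_A^*=\bigcup_{n\ge1}E_A^n$. The subshift is finitely irreducible: there is a finite set $\Omega$ of words such that for all $e,e'\in E$ some $\omega\in\Omega$ makes $e\omega e'$ admissible. $E^*_\rho=\{\omega\in E_A^*:\omega\rho \text{ admissible}\}$. $\sigma$ is the shift, $S_nf=\sum_{j<n}f\circ\sigma^j$, $[\omega]$ the cylinder of sequences beginning with $\omega$. $|\rho\wedge\rho'|$ is the length of the common initial block; for $\alpha>0$, $V_\alpha(f)=\sup_{n\ge1}\sup\{|f(\rho)-f(\rho')|e^{\alpha(n-1)}:|\rho\wedge\rho'|\ge n\}$, and $f$ is Hölder-type if $V_\alpha(f)<\infty$. $P(g)=\lim_n\frac1n\log\sum_{\omega\in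 E_A^n}\exp(\sup_{[\omega]}S_ng)$; a real $g$ is summable if $\sum_e\exp(\sup_{[e]}g)<\infty$. $f$ is strongly regular if $P(xf)=0$ for some $x>0$ and $0<P(xf)<\infty$ for some $x>0$. *)

From HB Require Import structures.
From mathcomp Require Import all_boot all_order all_algebra.
From mathcomp Require Import all_classical all_reals all_analysis.
Set Implicit Arguments. Unset Strict Implicit. Unset Printing Implicit Defensive.
Import Order.TTheory GRing.Theory Num.Theory.
Local Open Scope classical_set_scope.
Local Open Scope ring_scope.

Section SymbolicDynamics.
Variables (E : countType) (A : E -> E -> bool).

Definition admissible_seq (rho : nat -> E) : Prop := forall i, A (rho i) (rho i.+1).

Definition admissible_word (w : seq E) : Prop :=
  (0 < size w)%N /\ forall i, (i.+1 < size w)%N -> forall x0, A (nth x0 w i) (nth x0 w i.+1).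

Definition words_n (n : nat) : set (seq E) :=
  [set w | admissible_word w /\ size w = n].

Definition finitely_irreducible : Prop :=
  exists Omega : seq (seq E), (forall w, w \in Omega -> admissible_word w) /\
    forall e e', exists2 w, w \in Omega & admissible_word (e :: w ++ [:: e']).

Definition concat (w : seq E) (rho : nat -> E) : nat -> E :=
  fun i => if (i < size w)%N then nth (rho 0%N) w i else rho (i - size w)%N.

Definition shift (rho : nat -> E) : nat -> E := fun i => rho i.+1.

Definition cylinder (w : seq E) : set (nat -> E) :=
  [set rho | admissible_seq rho /\ forall i, (i < size w)%N -> rho i = nth (rho 0%N) w i].

Definition words_before (rho : nat -> E) : set (seq E) :=
  [set w | admissible_word w /\ admissible_seq (concat w rho)].

Definition agree_upto (n : nat) (rho rho' : nat -> E) : Prop :=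
  forall i, (i < n)%N -> rho i = rho' i.

Variable R : realType.

Definition birkhoff (n : nat) (f : (nat -> E) -> R) (rho : nat -> E) : R :=
  \sum_(j < n) f (iter j shift rho).

Definition holder_bounded (alpha : R) (f : (nat -> E) -> R) : Prop :=
  exists C : R, forall (n : nat) (rho rho' : nat -> E), (1 <= n)%N ->
    admissible_seq rho -> admissible_seq rho' -> agree_upto n rho rho' ->
    `|f rho - f rho'| * expR (alpha * (n - 1)%:R) <= C.

Definition holder_type (f : (nat -> E) -> R) : Prop :=
  exists2 alpha : R, 0 < alpha & holder_bounded alpha f.

Local Open Scope ereal_scope.

Definition partition_fun (g : (nat -> E) -> R) (n : nat) : \bar R :=
  \esum_(w in words_n n)
     expeR (ereal_sup [set (birkhoff n g rho)%:E | rho in cylinder w]).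

Definition pressure_is (g : (nat -> E) -> R) (p : \bar R) : Prop :=
  (fun n : nat => (n.+1%:R)^-1%:E * lne (partition_fun g n.+1)) @ \oo --> p.

Definition strongly_regular (f : (nat -> E) -> R) : Prop :=
  (exists2 x : R, (0 < x)%R & pressure_is (fun rho => x * f rho)%R 0) /\
  (exists2 x : R, (0 < x)%R &
     exists2 p : R, (0 < p)%R & pressure_is (fun rho => x * f rho)%R p%:E).

Definition M_fun (f : (nat -> E) -> R) (rho : nat -> E) (T : R) : \bar R :=
  ereal_sup [set (size w)%:R%:E | w in
    [set w | words_before rho w /\ (- T <= birkhoff (size w) f (concat w rho))%R]].

Definition m_fun (f : (nat -> E) -> R) (rho : nat -> E) (T : R) : \bar R :=
  ereal_sup [set (size w)%:R%:E | w in
    [set w | words_before rho w /\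
       forall w', words_before rho w' -> (size w' <= size w)%N ->
         (- T <= birkhoff (size w') f (concat w' rho))%R]].

End SymbolicDynamics.

(* Gluing two words before rho with one of the finitely many connecting words of
   finite irreducibility costs at most a bounded amount of Birkhoff sum (the
   Hoelder property gives bounded distortion) and at most a bounded number of
   letters. Hence both T |-> m(T) and T |-> M(T) are nondecreasing and
   superadditive up to additive constants, G(a + b + K) >= G(a) + G(b) - N, and
   a Fekete-type argument shows that G(T)/T converges to the supremum of
   (G(u - K) - N)/u. *)

From Pilot Require Import Defs.
From HB Require Import structures.
From mathcomp Require Import all_boot all_order all_algebra.
From mathcomp Require Import all_classical all_reals all_analysis.
From mathcomp Require Import lra zify.
Set Implicit Arguments. Unset Strict Implicit. Unset Printing Implicit Defensive.
Import Order.TTheory GRing.Theory Num.Theory.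
Local Open Scope classical_set_scope.
Local Open Scope ring_scope.

Lemma cvg_from_strict_bounds {d} {X : orderTopologicalType d} {T : Type}
    (F : set_system T) {FF : Filter F} (u : T -> X) (l : X) :
  (forall a, (a < l)%O -> \forall t \near F, (a < u t)%O) ->
  (forall b, (l < b)%O -> \forall t \near F, (u t < b)%O) -> u @ F --> l.
Proof.
move=> ev_gt ev_lt U /=; rewrite itv_nbhsE => -[i [oi li] iU].
apply: (filterS iU).
move: i oi li {iU} => [[[] a|[]] [[] b|[]]] //= _; rewrite in_itv /=.
- move=> /andP[la lb].
  by apply: filterS2 (ev_gt a la) (ev_lt b lb) => t /= h1 h2; rewrite in_itv /= h1 h2.
- rewrite andbT => la.
  by apply: filterS (ev_gt a la) => t /= h; rewrite in_itv /= h.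
- by move=> lb; apply: filterS (ev_lt b lb) => t /= h; rewrite in_itv /= h.
- by move=> _; apply: nearW => t; rewrite /= in_itv.
Qed.

Section ApproxSuperadditive.
Context {R : realType}.

Definition approx_superadditive (G : R -> \bar R) (T0 K N : R) :=
  forall a b x y, T0 <= a -> T0 <= b ->
  (x%:E < G a)%E -> (y%:E < G b)%E -> ((x + y - N)%:E <= G (a + b + K)%R)%E.

Definition superadditive_rate (G : R -> \bar R) (T0 K N : R) := ereal_sup
  [set ((G (u - K)%R - N%:E) * u^-1%:E)%E | u in [set u | T0 + K <= u]].

Lemma approx_superadditive_iter (G : R -> \bar R) (T0 K N u x : R) : 0 < T0 -> 0 <= K ->
  approx_superadditive G T0 K N -> T0 + K <= u -> ((x + N)%:E < G (u - K)%R)%E ->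
  forall (q : nat) (z : R), z < q.+1%:R * x -> ((z + N)%:E < G (q.+1%:R * u - K)%R)%E.
Proof.
move=> T0_gt0 K_ge0 G_sup uT0 xG; elim=> [|q IH] z.
  by rewrite !mul1r => zx; apply: le_lt_trans xG; rewrite lee_fin; lra.
(* the slack d is shared between the two summands and the final strict inequality *)
move=> zx; have [d dE] : {d | d = q.+2%:R * x - z} by eexists.
have d_gt0 : 0 < d by rewrite dE subr_gt0.
have Gq : ((q.+1%:R * x - d / 3 + N)%:E < G (q.+1%:R * u - K)%R)%E.
  by apply: IH; lra.
have G1 : ((x - d / 3 + N)%:E < G (u - K)%R)%E.
  by apply: le_lt_trans xG; rewrite lee_fin; lra.
have T0u : T0 <= u - K by lra.
have T0qu : T0 <= q.+1%:R * u - K.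
  have u_ge0 : 0 <= u by lra.
  have : u <= q.+1%:R * u by apply: ler_peMl u_ge0 _; rewrite ler1n.
  lra.
have := G_sup _ _ _ _ T0qu T0u Gq G1.
have -> : q.+1%:R * u - K + (u - K) + K = q.+2%:R * u - K.
  by rewrite [in RHS]mulrSr; lra.
by apply: lt_le_trans; rewrite lte_fin; rewrite mulrSr in dE; lra.
Qed.

Lemma approx_superadditive_eventually_gt (G : R -> \bar R) (T0 K N r u x : R) :
  0 < T0 -> 0 <= K -> 0 <= N -> {homo G : a b / (a <= b)%O} ->
  approx_superadditive G T0 K N -> 0 <= r -> T0 + K <= u -> r * u < x ->
  ((x + N)%:E < G (u - K)%R)%E ->
  \forall T \near +oo, (r%:E < G T * T^-1%:E)%E.
Proof.
move=> T0_gt0 K_ge0 N_ge0 G_nd G_sup r_ge0 uT0 rux xG.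
have u_gt0 : 0 < u by lra.
have xru_gt0 : 0 < x - r * u by lra.
exists (Num.max (T0 + u) ((x + 1) * u / (x - r * u))); split; first exact: num_real.
move=> T; rewrite gt_max => /andP[T0uT /ltW Tbig].
have T_gt0 : 0 < T by lra.
have Tu_ge0 : 0 <= T / u by rewrite divr_ge0 //; lra.
have /andP[nle nlt] := truncn_itv Tu_ge0.
have n_gt0 : (0 < Num.truncn (T / u))%N.
  by rewrite truncn_gt0 ler_pdivlMr // mul1r; lra.
(* with n := floor (T / u), G T >= G (n u - K) > n x - 1 >= r T *)
move: (Num.truncn _) n_gt0 nle nlt => n n_gt0 nle nlt.
have nuT : n%:R * u - K <= T by rewrite ler_pdivlMr // in nle; lra.
have rT : r * T <= n%:R * x - 1.
  rewrite ler_pdivrMr // in Tbig.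
  rewrite -addn1 natrD ltr_pdivrMr // in nlt.
  suff : r * T * u <= (n%:R * x - 1) * u by rewrite ler_pM2r.
  have x_ge0 : 0 <= x by have := mulr_ge0 r_ge0 (ltW u_gt0); lra.
  nra.
case: n n_gt0 nuT rT {nle nlt} => // q _ nuT rT.
have zq : q.+1%:R * x - 1 < q.+1%:R * x by lra.
have Gq := approx_superadditive_iter T0_gt0 K_ge0 G_sup uT0 xG zq.
have := lt_le_trans Gq (G_nd _ _ nuT); case: (G T) => [g| |] //= gq.
  by rewrite -EFinM lte_fin ltr_pdivlMr // mulrC; rewrite lte_fin in gq; nra.
by rewrite gt0_mulye ?lte_fin ?invr_gt0 // ltry.
Qed.

Lemma superadditive_rate_lower (G : R -> \bar R) (T0 K N : R) (a : \bar R) :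
  0 < T0 -> 0 <= K -> 0 <= N -> {homo G : a b / (a <= b)%O} ->
  (forall T, T0 <= T -> (0 <= G T)%E) -> approx_superadditive G T0 K N ->
  (a < superadditive_rate G T0 K N)%E -> \forall T \near +oo, (a < G T * T^-1%:E)%E.
Proof.
move=> T0_gt0 K_ge0 N_ge0 G_nd G_ge0 G_sup; have [a_lt0 _|a_ge0] := ltP a 0%E.
  exists T0; split=> [|T T0T]; first exact: num_real.
  apply: lt_le_trans a_lt0 _; apply: mule_ge0; first exact/G_ge0/ltW.
  by rewrite lee_fin invr_ge0; lra.
case: a a_ge0 => [r r_ge0| _|//]; last by rewrite ltNge leey.
rewrite lee_fin in r_ge0; move=> /ereal_sup_gt[_ [u /= uT0 <-] r_lt].
have u_gt0 : 0 < u by lra.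
suff [x rux xG] : exists2 x, r * u < x & ((x + N)%:E < G (u - K)%R)%E.
  exact: approx_superadditive_eventually_gt G_nd G_sup r_ge0 uT0 rux xG.
move: r_lt; case: (G (u - K)%R) => [g| |] r_lt.
- rewrite -EFinB -EFinM lte_fin ltr_pdivlMr // in r_lt.
  by exists ((r * u + (g - N)) / 2); [lra | rewrite lte_fin; lra].
- by exists (r * u + 1); [lra | rewrite ltry].
- by move: r_lt; rewrite /= mulNyr gtr0_sg ?invr_gt0 // mul1e ltNge leNye.
Qed.

Lemma superadditive_rate_upper (G : R -> \bar R) (T0 K N : R) (b : \bar R) :
  0 < T0 -> 0 <= K -> 0 <= N -> (forall T, T0 <= T -> (0 <= G T)%E) ->
  (superadditive_rate G T0 K N < b)%E -> \forall T \near +oo, (G T * T^-1%:E < b)%E.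
Proof.
move=> T0_gt0 K_ge0 N_ge0 G_ge0.
have rate_ub T : T0 <= T ->
    ((G T - N%:E) * (T + K)^-1%:E <= superadditive_rate G T0 K N)%E.
  move=> T0T; apply: ereal_sup_ubound; exists (T + K); first by rewrite /=; lra.
  by rewrite addrK.
have rate_gtNy : (-oo < superadditive_rate G T0 K N)%E.
  apply: lt_le_trans (rate_ub T0 (lexx _)).
  have := G_ge0 T0 (lexx _); case: (G T0) => [g| |] //= _.
    by rewrite -EFinB -EFinM ltNyr.
  by rewrite gt0_mulye ?lte_fin ?invr_gt0 //; lra.
case: (superadditive_rate G T0 K N) rate_gtNy rate_ub => [l| |] //= _ rate_ub lb;
  last by rewrite ltNge leey in lb.
have G_le T : T0 <= T -> exists2 g, G T = g%:E & g <= l * (T + K) + N.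
  move=> T0T; have := rate_ub T T0T; have := G_ge0 T T0T.
  have TK_gt0 : 0 < T + K by lra.
  case: (G T) => [g| |] //= _.
    by rewrite -EFinB -EFinM lee_fin ler_pdivrMr // => h; exists g => //; lra.
  by rewrite gt0_mulye ?lte_fin ?invr_gt0 // leye_eq.
case: b lb => [r| |] //= lr; last first.
  exists T0; split=> [|T /ltW /G_le[g -> _]]; first exact: num_real.
  by rewrite -EFinM ltry.
rewrite lte_fin in lr.
exists (T0 + (`|l| * K + N) / (r - l)); split=> [|T TM]; first exact: num_real.
have rl_gt0 : 0 < r - l by lra.
have bound_ge0 : 0 <= (`|l| * K + N) / (r - l).
  by rewrite divr_ge0 ?(ltW rl_gt0) // addr_ge0 // mulr_ge0.
have T_gt0 : 0 < T by lra.
have [g -> gle] := G_le T ltac:(lra).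
rewrite -EFinM lte_fin ltr_pdivrMr //.
have : `|l| * K + N < (r - l) * T by rewrite -ltr_pdivrMl // mulrC; lra.
have : l * K <= `|l| * K by rewrite ler_wpM2r // ler_norm.
nra.
Qed.

Lemma superadditive_rate_cvg (G : R -> \bar R) (T0 K N : R) :
  0 < T0 -> 0 <= K -> 0 <= N -> {homo G : a b / (a <= b)%O} ->
  (forall T, T0 <= T -> (0 <= G T)%E) -> approx_superadditive G T0 K N ->
  (fun T => G T * T^-1%:E)%E @ +oo --> superadditive_rate G T0 K N.
Proof.
move=> T0_gt0 K_ge0 N_ge0 G_nd G_ge0 G_sup; apply: cvg_from_strict_bounds => c.
  exact: superadditive_rate_lower.
exact: superadditive_rate_upper.
Qed.

Lemma approx_superadditive_ratio_cvg (G : R -> \bar R) (K N : R) :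
  0 <= K -> 0 <= N -> {homo G : a b / (a <= b)%O} ->
  (forall T, G T = -oo%E \/ (0 <= G T)%E) -> approx_superadditive G 0 K N ->
  exists l : \bar R, (fun T => G T * T^-1%:E)%E @ +oo --> l.
Proof.
move=> K_ge0 N_ge0 G_nd G_ge0 G_sup.
have [[T1 GT1_gtNy]|G_Ny] := pselect (exists T, G T <> -oo%E); last first.
  exists -oo%E; apply: (@cvg_near_cst _ (\bar R)).
  exists 0; split=> [|T T_gt0]; first exact: num_real.
  have -> : G T = -oo%E by apply: contrapT => GT; apply: G_Ny; exists T.
  by rewrite mulNyr gtr0_sg ?invr_gt0 // mul1e.
have GT1_ge0 : (0 <= G T1)%E by case: (G_ge0 T1).
set T0 := Num.max T1 1.
have T1T0 : T1 <= T0 by rewrite le_max lexx.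
have T0_ge1 : 1 <= T0 by rewrite le_max lexx orbT.
exists (superadditive_rate G T0 K N); apply: superadditive_rate_cvg => //.
- by lra.
- by move=> T T0T; apply: le_trans GT1_ge0 (G_nd _ _ _); lra.
- by move=> a b x y T0a T0b; apply: G_sup; lra.
Qed.

End ApproxSuperadditive.

Section Words.
Variables (E : countType) (A : E -> E -> bool).
Implicit Types (x y : nat -> E) (u v w g : seq E).
Local Notation shift := (@Defs.shift E).

Lemma concat_nil x : concat [::] x = x.
Proof. by apply: funext => i; rewrite /concat /= subn0. Qed.

Lemma concat_cat u v x : concat (u ++ v) x = concat u (concat v x).
Proof.
apply: funext => i; rewrite /concat size_cat.
have [iu|ui] := ltnP i (size u).
  by rewrite ltn_addr // nth_cat iu; apply: set_nth_default.
by rewrite nth_cat [(i < size u)%N]ltnNge ui /= ltn_subLR // subnDA.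
Qed.

Lemma shift_concat_cons a u x : shift (concat (a :: u) x) = concat u x.
Proof. by apply: funext => i; rewrite /Defs.shift /concat /= ltnS subSS. Qed.

Lemma iter_shiftE j x i : iter j shift x i = x (i + j)%N.
Proof. by elim: j i => [|j IH] i; rewrite ?addn0 // iterS /Defs.shift IH addSnnS. Qed.

Lemma iter_shift_concat u x : iter (size u) shift (concat u x) = x.
Proof.
by apply: funext => i; rewrite iter_shiftE /concat ltnNge leq_addl /= addnK.
Qed.

Lemma admissible_seqE x :
  admissible_seq A x <-> A (x 0%N) (x 1%N) /\ admissible_seq A (shift x).
Proof.
split=> [adm | [adm0 adm] [|i] //]; last exact: adm.
by split=> // i; apply: adm.
Qed.

Lemma admissible_concat_cons a u y :
  admissible_seq A (concat (a :: u) y) <->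
  [/\ path A a u, A (last a u) (y 0%N) & admissible_seq A y].
Proof.
elim: u a => [|b u IH] a; rewrite admissible_seqE shift_concat_cons.
  by rewrite concat_nil; split=> [[]|[]].
rewrite IH /=; split=> [[ab [? ? ?]]|[/andP[ab ?] ? ?]]; first by split=> //; apply/andP.
by split.
Qed.

Lemma admissible_word_cons a u : admissible_word A (a :: u) <-> path A a u.
Proof.
split=> [[_ adm]|/(pathP a) adm]; first by apply/(pathP a) => i iu; apply: adm.
split=> // i iu x0.
by rewrite (set_nth_default a x0 iu) (set_nth_default a x0 (ltnW iu)); apply: adm.
Qed.

Lemma words_beforeP x w :
  words_before A x w <-> (0 < size w)%N /\ admissible_seq A (concat w x).
Proof.
split=> [[[]] //|[]]; case: w => // a u _ adm; split=> //.
by case/admissible_concat_cons: adm => /admissible_word_cons.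
Qed.

Lemma admissible_iter_shift j x :
  admissible_seq A x -> admissible_seq A (iter j shift x).
Proof. by move=> adm i; rewrite !iter_shiftE. Qed.

Lemma admissible_concat_suffix u v x :
  admissible_seq A (concat (u ++ v) x) -> admissible_seq A (concat v x).
Proof.
by rewrite concat_cat => /(admissible_iter_shift (size u)); rewrite iter_shift_concat.
Qed.

Lemma admissible_concat_bridge a u g x y :
  admissible_seq A (concat (a :: u) y) ->
  admissible_word A (last a u :: g ++ [:: x 0%N]) -> admissible_seq A x ->
  admissible_seq A (concat ((a :: u) ++ g) x).
Proof.
case/admissible_concat_cons => au _ _ /admissible_word_cons.
rewrite cat_path /= andbT => /andP[ug gx] adm_x.
by apply/admissible_concat_cons; rewrite cat_path au last_cat.
Qed.

Definition connecting_words (Om : seq (seq E)) :=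
  forall e e', exists2 g, g \in Om & admissible_word A (e :: g ++ [:: e']).

Lemma connecting_words_pred Om : connecting_words Om -> forall b, exists a, A a b.
Proof.
move=> conn b; have [g _ /admissible_word_cons] := conn b b.
by rewrite cat_path /= andbT => /andP[_ gb]; exists (last b g).
Qed.

Lemma exists_words_before Om x : connecting_words Om -> admissible_seq A x ->
  forall n, exists w, size w = n.+1 /\ words_before A x w.
Proof.
move=> /connecting_words_pred pred adm_x; elim=> [|n [w [sw /words_beforeP[_ adm]]]].
  have [a ax] := pred (x 0%N).
  by exists [:: a]; split=> //; apply/words_beforeP; split=> //; apply/admissible_concat_cons.
case: w sw adm => // b u sw adm; have [a ab] := pred b.
exists (a :: b :: u); split; first by rewrite /= -sw.
apply/words_beforeP; split=> //; apply/admissible_concat_cons.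
by case/admissible_concat_cons: adm => bu ? ?; split=> //=; rewrite ab.
Qed.

End Words.

Section Birkhoff.
Variables (E : countType) (A : E -> E -> bool).
Context {R : realType}.
Implicit Types (f : (nat -> E) -> R) (x y : nat -> E) (u v w g : seq E).
Local Notation shift := (@Defs.shift E).

Lemma birkhoffD n k f x :
  birkhoff (n + k) f x = birkhoff n f x + birkhoff k f (iter n shift x).
Proof.
rewrite /birkhoff big_split_ord /=; congr (_ + _).
by apply: eq_bigr => j _; rewrite addnC iterD.
Qed.

Lemma birkhoff_cat u v f x :
  birkhoff (size (u ++ v)) f (concat (u ++ v) x) =
  birkhoff (size u) f (concat u (concat v x)) + birkhoff (size v) f (concat v x).
Proof. by rewrite size_cat concat_cat birkhoffD iter_shift_concat. Qed.

Definition bounded_distortion f (D : R) := forall w x y,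
  admissible_seq A (concat w x) -> admissible_seq A (concat w y) ->
  `|birkhoff (size w) f (concat w x) - birkhoff (size w) f (concat w y)| <= D.

Lemma bounded_distortion_ge f D w x y : bounded_distortion f D ->
  admissible_seq A (concat w x) -> admissible_seq A (concat w y) ->
  birkhoff (size w) f (concat w y) - D <= birkhoff (size w) f (concat w x).
Proof. by move=> fD wx wy; have /ler_normlP[+ _] := fD w x y wx wy; lra. Qed.

(* summing the Hoelder bound along the word gives a geometric series *)
Lemma holder_bounded_distortion alpha f : 0 < alpha -> holder_bounded A alpha f ->
  exists2 D, 0 <= D & bounded_distortion f D.
Proof.
move=> alpha_gt0 [C fC]; set C' := Num.max C 0; set q := expR (- alpha).
have C'_ge0 : 0 <= C' by rewrite /C' le_max lexx orbT.
have q_gt0 : 0 < q by rewrite expR_gt0.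
have q_lt1 : `|q| < 1 by rewrite gtr0_norm // expR_lt1 oppr_lt0.
exists (C' * (1 - q)^-1).
  by rewrite mulr_ge0 // invr_ge0 subr_ge0 ltW // -(gtr0_norm q_gt0).
move=> w x y wx wy; rewrite /birkhoff -sumrB.
apply: le_trans (ler_norm_sum _ _ _) _.
apply: (@le_trans _ _ (\sum_(j < size w) C' * q ^+ (size w - j.+1))).
  apply: ler_sum => j _; set n := (size w - j)%N.
  have n_ge1 : (1 <= n)%N by rewrite subn_gt0.
  have agree : agree_upto n (iter j shift (concat w x)) (iter j shift (concat w y)).
    move=> i ilt; rewrite !iter_shiftE /concat.
    have ijw : (i + j < size w)%N by rewrite addnC -ltn_subRL.
    by rewrite ijw; apply: set_nth_default.
  have := fC n _ _ n_ge1 (admissible_iter_shift j wx) (admissible_iter_shift j wy) agree.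
  rewrite -ler_pdivlMr ?expR_gt0 // -expRN -mulNr expRM_natr subn1 -subnS => le_C.
  by apply: le_trans le_C _; rewrite ler_wpM2r ?exprn_ge0 ?(ltW q_gt0) // /C' le_max lexx.
rewrite (reindex_inj rev_ord_inj) /=.
rewrite (eq_bigr (fun j : 'I_(size w) => C' * q ^+ j)) => [|j _]; last first.
  by rewrite subnSK // subKn // ltnW.
by have := geometric_le_lim (size w) C'_ge0 q_gt0 q_lt1; rewrite /series /= big_mkord.
Qed.

Definition connector_bound f (Om : seq (seq E)) (K : R) :=
  forall g z, g \in Om -> admissible_seq A (concat g z) ->
  `|birkhoff (size g) f (concat g z)| <= K.

Lemma exists_connector_bound f D Om : bounded_distortion f D ->
  exists2 K, 0 <= K & connector_bound f Om K.
Proof.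
move=> fD; elim: Om => [|g Om [K K_ge0 OmK]]; first by exists 0.
have [[z0 gz0]|no_adm] := pselect (exists z, admissible_seq A (concat g z)); last first.
  exists K => // g' z; rewrite inE => /orP[/eqP -> gz|]; last exact: OmK.
  by case: no_adm; exists z.
set S0 := birkhoff (size g) f (concat g z0).
exists (Num.max (`|S0| + D) K); first by rewrite le_max K_ge0 orbT.
move=> g' z; rewrite inE le_max => /orP[/eqP -> gz|g'Om g'z]; last by rewrite OmK ?orbT.
apply/orP; left; have := fD g z z0 gz gz0.
have := ler_normD (birkhoff (size g) f (concat g z) - S0) S0; rewrite subrK.
by move: (birkhoff _ _ _) => S; lra.
Qed.

End Birkhoff.

Section Superadditivity.
Variables (E : countType) (A : E -> E -> bool).
Context {R : realType}.
Variables (f : (nat -> E) -> R) (rho : nat -> E) (Om : seq (seq E)).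
Hypothesis Om_connects : connecting_words A Om.
Hypothesis rho_adm : admissible_seq A rho.
Implicit Types (y : nat -> E) (u v w g : seq E).

Lemma connect_words_before w1 w2 : words_before A rho w1 -> words_before A rho w2 ->
  exists2 g, g \in Om & words_before A rho (w1 ++ g ++ w2).
Proof.
case/words_beforeP; case: w1 => // a1 u1 _ w1_adm.
case/words_beforeP; case: w2 => // a2 u2 _ w2_adm.
have [g gOm g_conn] := Om_connects (last a1 u1) a2.
exists g => //; apply/words_beforeP; split=> //; rewrite catA concat_cat.
exact: admissible_concat_bridge w1_adm g_conn w2_adm.
Qed.

Lemma connect_to_rho u y : (0 < size u)%N -> admissible_seq A (concat u y) ->
  exists2 g, g \in Om & admissible_seq A (concat (u ++ g) rho).
Proof.
case: u => // a u _ u_adm; have [g gOm g_conn] := Om_connects (last a u) (rho 0%N).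
by exists g => //; apply: admissible_concat_bridge u_adm g_conn rho_adm.
Qed.

Lemma M_fun_nondecr : {homo M_fun A f rho : a b / (a <= b)%O}.
Proof.
move=> a b ab; apply: ereal_sup_le => _ [w [w_before Sw] <-].
by exists w => //; split=> //; apply: le_trans Sw; rewrite lerN2.
Qed.

Lemma m_fun_nondecr : {homo m_fun A f rho : a b / (a <= b)%O}.
Proof.
move=> a b ab; apply: ereal_sup_le => _ [w [w_before Sw] <-].
exists w => //; split=> // w' w'_before w'w.
by apply: le_trans (Sw w' w'_before w'w); rewrite lerN2.
Qed.

Lemma M_fun_approx_superadditive D K : bounded_distortion A f D ->
  connector_bound A f Om K -> approx_superadditive (M_fun A f rho) 0 (K + D) 0.
Proof.
move=> fD OmK a b x y _ _.
move=> /ereal_sup_gt[_ [w1 [w1_before Sw1] <-] xw1].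
move=> /ereal_sup_gt[_ [w2 [w2_before Sw2] <-] yw2].
have [g gOm w_before] := connect_words_before w1_before w2_before.
apply: le_ereal_sup_tmp; exists (size (w1 ++ g ++ w2))%:R%:E.
  exists (w1 ++ g ++ w2) => //; split=> //.
  have /words_beforeP[_ w_adm] := w_before.
  have /words_beforeP[_ w1_adm] := w1_before.
  have w1_adm' : admissible_seq A (concat w1 (concat (g ++ w2) rho)).
    by rewrite -concat_cat.
  have g_adm : admissible_seq A (concat g (concat w2 rho)).
    by rewrite -concat_cat; apply: admissible_concat_suffix w_adm.
  have := bounded_distortion_ge fD w1_adm' w1_adm.
  have /ler_normlP[+ _] := OmK g _ gOm g_adm.
  rewrite !birkhoff_cat; lra.
rewrite lee_fin subr0 !size_cat !natrD; rewrite !lte_fin in xw1 yw2.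
by have := ler0n R (size g); lra.
Qed.

Definition birkhoff_bounded_below (T : R) (n : nat) := forall w,
  words_before A rho w -> (size w <= n)%N -> - T <= birkhoff (size w) f (concat w rho).

(* split a long word as u ++ v with v of length n2, and replace v by a connector g *)
Lemma birkhoff_bounded_below_glue D K a b n1 n2 :
  0 <= a -> 0 <= b -> 0 <= K + D -> (0 < n2)%N ->
  bounded_distortion A f D -> connector_bound A f Om K ->
  birkhoff_bounded_below a n1 -> birkhoff_bounded_below b n2 ->
  birkhoff_bounded_below (a + b + (K + D)) (n1 + n2 - \max_(g <- Om) size g).
Proof.
move=> a_ge0 b_ge0 KD_ge0 n2_gt0 fD OmK low1 low2 w w_before.
have Om_size g : g \in Om -> (size g <= \max_(g <- Om) size g)%N.
  by move=> gOm; apply: leq_bigmax_seq.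
move: (\max_(g <- Om) size g)%N Om_size => N Om_size w_size.
have [w_short|w_long] := leqP (size w) n2.
  by have := low2 w w_before w_short; lra.
have /words_beforeP[_ w_adm] := w_before.
rewrite -(cat_take_drop (size w - n2) w) in w_adm *.
set u := take _ w; set v := drop _ w.
have size_v : size v = n2 by rewrite size_drop; lia.
have size_u : size u = (size w - n2)%N by rewrite size_take; case: ifP; lia.
have v_adm := admissible_concat_suffix w_adm.
have u_adm : admissible_seq A (concat u (concat v rho)) by rewrite -concat_cat.
have [|g gOm ug_adm] := connect_to_rho _ u_adm; first by rewrite size_u; lia.
have ug_adm' : admissible_seq A (concat u (concat g rho)) by rewrite -concat_cat.
have /ler_normlP[_ Sg] := OmK g _ gOm (admissible_concat_suffix ug_adm).
have Sv : - b <= birkhoff (size v) f (concat v rho).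
  by apply: low2; [apply/words_beforeP; rewrite size_v | rewrite size_v].
have Sug : - a <= birkhoff (size (u ++ g)) f (concat (u ++ g) rho).
  apply: low1; first by apply/words_beforeP; rewrite size_cat size_u; split=> //; lia.
  by rewrite size_cat size_u; have := Om_size g gOm; lia.
have := bounded_distortion_ge fD u_adm ug_adm'.
rewrite birkhoff_cat in Sug; rewrite birkhoff_cat; lra.
Qed.

Lemma m_fun_approx_superadditive D K : 0 <= K + D ->
  bounded_distortion A f D -> connector_bound A f Om K ->
  approx_superadditive (m_fun A f rho) 0 (K + D) (\max_(g <- Om) size g)%:R.
Proof.
move=> KD_ge0 fD OmK a b x y a_ge0 b_ge0 xa yb.
have mb := yb.
move: xa yb => /ereal_sup_gt[_ [w1 [w1_before low1] <-] xw1].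
move=> /ereal_sup_gt[_ [w2 [w2_before low2] <-] yw2].
rewrite !lte_fin in xw1 yw2.
have [w1_short|w1_long] := leqP (size w1) (\max_(g <- Om) size g).
  apply: (@le_trans _ _ y%:E).
    rewrite lee_fin; have := ler_nat R (size w1) (\max_(g <- Om) size g).
    by rewrite w1_short; lra.
  by apply: le_trans (ltW mb) (m_fun_nondecr _); lra.
have w2_gt0 : (0 < size w2)%N by case/words_beforeP: w2_before.
set n := (size w1 + size w2 - \max_(g <- Om) size g)%N.
have [w [size_w w_before]] := exists_words_before Om_connects rho_adm n.-1.
rewrite prednK in size_w; last by rewrite /n; lia.
apply: le_ereal_sup_tmp; exists (size w)%:R%:E.
  exists w => //; split=> //; rewrite size_w.
  exact: birkhoff_bounded_below_glue a_ge0 b_ge0 KD_ge0 w2_gt0 fD OmK low1 low2.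
by rewrite lee_fin size_w /n natrB ?natrD; [lra | lia].
Qed.

End Superadditivity.

Lemma ereal_sup_natr_eqNy_or_ge0 {R : realType} {T : Type} (P : set T) (n : T -> nat) :
  ereal_sup [set ((n w)%:R : R)%:E | w in P] = -oo%E \/
  (0 <= ereal_sup [set ((n w)%:R : R)%:E | w in P])%E.
Proof.
have [[w Pw]|P0] := pselect (exists w, P w).
  by right; apply: le_ereal_sup_tmp; exists (n w)%:R%:E; [exists w | rewrite lee_fin].
by left; apply/ereal_sup_ninfty => y [w Pw _]; case: P0; exists w.
Qed.

Theorem mainTheorem2 (E : countType) (A : E -> E -> bool) (R : realType)
  (f : (nat -> E) -> R) (delta : R) (rho : nat -> E) :
  finitely_irreducible A ->
  holder_type A f ->
  strongly_regular A f ->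
  0 < delta ->
  pressure_is A (fun x => delta * f x) 0%E ->
  admissible_seq A rho ->
  (exists l : \bar R,
     (fun T : R => (m_fun A f rho T * (T^-1)%:E)%E) @ +oo --> l) /\
  (exists l : \bar R,
     (fun T : R => (M_fun A f rho T * (T^-1)%:E)%E) @ +oo --> l).
Proof.
(* existence of the limits only needs finite irreducibility and the Hoelder property *)
move=> [Om [_ Om_connects]] [alpha alpha_gt0 f_holder] _ _ _ rho_adm.
have [D D_ge0 fD] := holder_bounded_distortion alpha_gt0 f_holder.
have [K K_ge0 OmK] := exists_connector_bound Om fD.
have KD_ge0 : 0 <= K + D by rewrite addr_ge0.
split.
- apply: approx_superadditive_ratio_cvg KD_ge0 (ler0n _ _) (m_fun_nondecr A f rho) _
    (m_fun_approx_superadditive Om_connects rho_adm KD_ge0 fD OmK).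
  by move=> T; apply: ereal_sup_natr_eqNy_or_ge0.
- apply: approx_superadditive_ratio_cvg KD_ge0 (lexx 0) (M_fun_nondecr A f rho) _
    (M_fun_approx_superadditive Om_connects fD OmK).
  by move=> T; apply: ereal_sup_natr_eqNy_or_ge0.
Qed.
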